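(* Assume ${\bf v}$ has the RCI property and is completely irrational. Then $$\Xi_{\bf v}=\bigcup_{J\subset\{1,\dots,d\}}\big\{\mathcal{L}^J_{{\bf v},x}: x\in\mathtt X^J_{\bf v}\big\}\;\cup\;\bigcup_{i=1}^d\Xi_{{\bf v}\setminus i},$$ and consequently $$\Xi_{\bf v}=\bigcup_{\emptyset\neq I\subset\{1,\dots,d\}}\ \bigcup_{J\subset I}\big\{\mathcal{L}^J_{{\bf v}_I,x}: x\in\mathtt X^J_{{\bf v}_I}\big\}\;\cup\;\{\mathbb{Z}^D\}.$$
   Context: Let $D\ge d\ge1$ be integers and ${\bf v}=\{v_1,\dots,v_d\}$ a set of linearly independent unit vectors in $\mathbb{R}^D$. For $I\subset\{1,\dots,d\}$ write ${\bf v}_I=\{v_i\}_{i\in I}$, ${\bf v}\setminus i:={\bf v}_{\{1,\dots,d\}\setminus\{i\}}$, $\mathcal{L}_{{\bf v}_I}:=\{n\in\mathbb{Z}^D: v_i\cdot n\ge0\ \forall i\in I\}$ (so $\mathcal{L}_{{\bf v}_\emptyset}=\mathbb{Z}^D$, $\mathcal{L}_{\bf v}:=\mathcal{L}_{{\bf v}_{\{1,\dots,d\}}}$), $A_{{\bf v}_I}z=(v_i\cdot z)_{i\in I}$, and $\mathcal{X}_{{\bf v}_I}:=\overline{A_{{\bf v}_I}(\mathcal{L}_{{\bf v}_I})}\subset[0,\infty)^I$. Subsets of $\mathbb{Z}^D$ carry the Fell topology (= product topology on $\{0,1\}^{\mathbb{Z}^D}$). $\Xi_{{\bf v}_I}:=\overline{\{\mathcal{L}_{{\bf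 v}_I}-n: n\in\mathcal{L}_{{\bf v}_I}\}}$, $\Xi_\emptyset=\{\mathbb{Z}^D\}$, $\Xi_{\bf v}:=\Xi_{{\bf v}_{\{1,\dots,d\}}}$. For nonempty $I$, ${\bf v}_I$ is rational (R) if $A_{{\bf v}_I}(\mathcal{L}_{{\bf v}_I})$ is a closed, discrete, finitely generated subsemigroup of $[0,\infty)^I$, and completely irrational (CI) if $\mathcal{X}_{{\bf v}_I}=[0,\infty)^I$; ${\bf v}$ has the RCI property if every ${\bf v}_I$ with $\emptyset\neq I\subsetneq\{1,\dots,d\}$ is R or CI. For $J\subset I$, $x\in\mathbb{R}^I$: $\mathcal{L}^J_{{\bf v}_I,x}:=\{n\in\mathbb{Z}^D: v_k\cdot n+x_k>0\ (k\in J),\ v_k\cdot n+x_k\ge0\ (k\in I\setminus J)\}$; $\mathtt X^\emptyset_{{\bf v}_I}:=\mathcal{X}_{{\bf v}_I}$ and for $J\ne\emptyset$, $\mathtt X^J_{{\bf v}_I}:=\{x\in\mathcal{X}_{{\bf v}_I}:\forall k\in J\ \exists n\in\mathbb{Z}^D,\ x_k=v_k\cdot n\neq0\}$; $\mathtt X^J_{\bf v}$ is the case $I=\{1,\dots,d\}$. *)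

From HB Require Import structures.
From mathcomp Require Import all_boot all_order all_algebra.
From mathcomp Require Import all_classical all_reals all_analysis.
Set Implicit Arguments. Unset Strict Implicit. Unset Printing Implicit Defensive.
Import Order.TTheory GRing.Theory Num.Theory.
Import numFieldNormedType.Exports.
Local Open Scope classical_set_scope.
Local Open Scope ring_scope.

Definition ZD (D : nat) := 'rV[int]_D.

(* Subsets of Z^D as indicator functions Z^D -> bool; the type ZD D -> bool
   carries the product topology of the discrete space bool, i.e. the Fell
   topology on subsets of Z^D. *)
Definition subZ (D : nat) := ZD D -> bool.

Definition RdT (R : realType) (d : nat) : 'I_d -> topologicalType := fun _ => R.
Definition BoolT (D : nat) : ZD D -> topologicalType := fun _ => bool.

Section Defs.
Variables (R : realType) (d D : nat) (V : 'M[R]_(d, D)).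
(* row i of V is the vector v_i *)

Definition vdot (i : 'I_d) (n : ZD D) : R := \sum_(j < D) V i j * (n 0 j)%:~R.

(* L^J_{v_I,x} ;  coordinates of x outside I are irrelevant *)
Definition LJ (I J : {set 'I_d}) (x : 'I_d -> R) : subZ D :=
  fun n => [forall k in I, if k \in J then 0 < vdot k n + x k
                           else 0 <= vdot k n + x k].

Definition Lv (I : {set 'I_d}) : subZ D :=
  fun n => [forall k in I, 0 <= vdot k n].

(* A_{v_I} z, embedded in R^d with zeros outside I (R^I identified with
   {x : 'I_d -> R | x k = 0 for k \notin I}) *)
Definition Av (I : {set 'I_d}) (n : ZD D) : 'I_d -> R :=
  fun k => if k \in I then vdot k n else 0.

Definition AvL (I : {set 'I_d}) : set ('I_d -> R) :=
  [set Av I n | n in [set n | Lv I n]].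

Definition Xv (I : {set 'I_d}) : set ('I_d -> R) :=
  closure (AvL I : set (prod_topology (@RdT R d))).

Definition orthant (I : {set 'I_d}) : set ('I_d -> R) :=
  [set x : 'I_d -> R | forall k, if k \in I then 0 <= x k else x k == 0].

Definition XJ (I J : {set 'I_d}) : set ('I_d -> R) :=
  [set x | Xv I x /\ forall k, k \in J -> exists n : ZD D, x k = vdot k n /\ x k != 0].

Definition shiftZ (S : subZ D) (n : ZD D) : subZ D := fun m => S (m + n).

Definition Xi (I : {set 'I_d}) : set (subZ D) :=
  if I == finset.set0 then [set (fun _ => true)]
  else closure ([set shiftZ (Lv I) n | n in [set n | Lv I n]]
                : set (prod_topology (@BoolT D))).

Definition CI (I : {set 'I_d}) : Prop := Xv I = orthant I.

Definition discrete_set (T : topologicalType) (S : set T) : Prop :=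
  forall y, S y -> exists U, nbhs y U /\ U `&` S = [set y].

Definition rational (I : {set 'I_d}) : Prop :=
  [/\ closed (AvL I : set (prod_topology (@RdT R d))),
      discrete_set (AvL I : set (prod_topology (@RdT R d))),
      AvL I `<=` orthant I &
      exists gs : seq ('I_d -> R),
        AvL I = [set x | exists c : 'I_(size gs) -> nat,
                   x = (fun k => \sum_(i < size gs) (c i)%:R * (nth 0 gs i) k)]].

Definition RCI : Prop :=
  forall I : {set 'I_d}, I != finset.set0 -> I != [set: 'I_d]%SET -> rational I \/ CI I.
End Defs.

Definition unit_lin_indep (R : realType) (d D : nat) (V : 'M[R]_(d, D)) : Prop :=
  row_free V /\ forall i : 'I_d, \sum_(j < D) V i j ^+ 2 = 1.

From HB Require Import structures.
From mathcomp Require Import all_boot all_order all_algebra.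
From mathcomp Require Import all_classical all_reals all_analysis.
From mathcomp Require Import lra.

(* A limit S of translates L_v - n of the lattice cone is again a set of the
   form L^J_{v_I,x}: with I the directions k along which v_k . S is bounded
   below, x_k = - inf (v_k . S), and J the directions where this infimum is a
   value of v_k . Z^D that S misses, S is recovered because, as a limit of
   cones, it contains every m that is dominated in each direction separately by
   some element of S.  Conversely, complete irrationality makes A_v(L_v) dense
   in [0,oo)^d, so one translate can put every v_k . n just below x_k (k in J),
   just above x_k (k in I \ J) or far beyond all values seen in a finite window
   (k outside I); this reproduces L^J_{v_I,x} on that window, inside
   Xi_{v \ i} already when i is not in I. *)

Set Implicit Arguments. Unset Strict Implicit. Unset Printing Implicit Defensive.
Import Order.TTheory GRing.Theory Num.Theory.
Import numFieldNormedType.Exports.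
Local Open Scope classical_set_scope.
Local Open Scope ring_scope.

Lemma filter_forall_in (T : Type) (F : set_system T) (I : eqType) (s : seq I)
    (P : I -> set T) :
  Filter F -> (forall i, i \in s -> \forall x \near F, P i x) ->
  \forall x \near F, forall i, i \in s -> P i x.
Proof.
move=> FF; elim: s => [|i s IHs] Ps; first exact: nearW.
have Pi := Ps i (mem_head i s).
have {}IHs := IHs (fun j js => Ps j (@mem_behead _ (i :: s) j js)).
by apply: filterS (filterI Pi IHs) => x [Pix Psx] j; rewrite inE => /predU1P[->|/Psx].
Qed.

Section Cylinders.
Context (I : eqType) (T : I -> topologicalType).

Definition cylinder (s : seq I) (W : forall i, set (T i)) : set (prod_topology T) :=
  [set g | forall i, i \in s -> W i (g i)].

Lemma nbhs_cylinder (f : prod_topology T) s W :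
  (forall i, i \in s -> nbhs (f i) (W i)) -> nbhs f (cylinder s W).
Proof.
move=> Wf; apply: (@filter_forall_in _ (nbhs f) _ s (fun i g => W i (g i))) => i /Wf.
exact: (@proj_continuous I T i f (W i)).
Qed.

Definition cylinder_nbhs (f : prod_topology T) : set_system (prod_topology T) :=
  [set U | exists s W, (forall i, i \in s -> nbhs (f i) (W i)) /\ cylinder s W `<=` U].

Lemma cylinder_nbhs_filter f : Filter (cylinder_nbhs f).
Proof.
split.
- by exists [::], (fun _ => setT).
- move=> U1 U2 [s1 [W1 [W1f sU1]]] [s2 [W2 [W2f sU2]]].
  pose W i := (if i \in s1 then W1 i else setT) `&` (if i \in s2 then W2 i else setT).
  exists (s1 ++ s2), W; split.
    move=> i _; apply: filterI.
      by case: ifP => [/W1f|_] //; apply: filterT.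
    by case: ifP => [/W2f|_] //; apply: filterT.
  move=> g Wg; split; [apply: sU1 => i is1 | apply: sU2 => i is2].
    by have := Wg i; rewrite mem_cat is1 /W is1 => /(_ isT) [].
  by have := Wg i; rewrite mem_cat is2 orbT /W is2 => /(_ isT) [].
- by move=> U1 U2 sU12 [s [W [Wf sU1]]]; exists s, W; split => //; apply: subset_trans sU12.
Qed.

Lemma nbhs_prodP (f : prod_topology T) (U : set (prod_topology T)) :
  nbhs f U <-> exists s W, (forall i, i \in s -> nbhs (f i) (W i)) /\ cylinder s W `<=` U.
Proof.
split; last by move=> [s [W [Wf /filterS]]]; apply; apply: nbhs_cylinder.
have Fcyl := cylinder_nbhs_filter f.
suff : cylinder_nbhs f --> f by move=> /(_ U).
apply/cvg_sup => i A /= [_ [[B oB <-] Bfi sBA]].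
pose W j := [set y : T j | forall e : i = j, B (eq_rect j T y i (esym e))].
have WiE y : W i y <-> B y.
  by split=> [/(_ erefl) //|By e]; rewrite (eq_irrelevance e erefl).
exists [:: i], W; split.
  move=> j; rewrite inE => /eqP ->; apply: (@filterS _ _ _ B) => [y /WiE //|].
  exact: open_nbhs_nbhs.
by move=> g /(_ i (mem_head _ _)) /WiE /sBA.
Qed.

Lemma closure_prodP (f : prod_topology T) (A : set (prod_topology T)) :
  closure A f <->
  forall s W, (forall i, i \in s -> nbhs (f i) (W i)) -> A `&` cylinder s W !=set0.
Proof.
split=> [Af s W /nbhs_cylinder /Af //| Acyl U /nbhs_prodP [s [W [Wf sWU]]]].
by have [g [Ag Wg]] := Acyl s W Wf; exists g; split => //; apply: sWU.
Qed.

End Cylinders.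

Lemma closure_ptws_boolP (I : eqType) (A : set {ptws I -> bool}) (f : {ptws I -> bool}) :
  closure A f <-> forall s : seq I, exists2 g, A g & {in s, g =1 f}.
Proof.
rewrite closure_prodP; split=> [Af s | Af s W Wf].
  have [|g [Ag fg]] := Af s (fun i => [set f i]) => [i _|]; first exact: discrete_set1.
  by exists g => // i /fg.
have [g Ag fg] := Af s; exists g; split => // i si.
by rewrite fg //; apply: nbhs_singleton (Wf i si).
Qed.

Lemma closure_ptws_realP (R : realFieldType) (I : eqType) (A : set {ptws I -> R})
    (f : {ptws I -> R}) :
  closure A f <->
  forall (s : seq I) (e : R), 0 < e ->
    exists2 g, A g & forall i, i \in s -> `|g i - f i| < e.
Proof.
rewrite closure_prodP; split=> [Af s e e0 | Af s W Wf].
  have [|g [Ag fg]] := Af s (fun i => [set z : R | `|z - f i| < e]) => [i _|].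
    by apply/nbhs_ballP; exists e => // z; rewrite /ball /= distrC.
  by exists g.
have : \forall e \near (0 : R)^'+, forall i, i \in s -> forall z, `|z - f i| < e -> W i z.
  apply: filter_forall_in => i /Wf /nbhs_ballP [e0 e00 ballW].
  apply: filterS (nbhs_right_lt e00) => e e_lt z ze.
  by apply: ballW; rewrite /ball /= distrC (lt_trans ze).
move=> /(filterI (nbhs_right_gt 0)) /filter_ex [e [e0 eW]].
have [g Ag fg] := Af s e e0; exists g; split=> // i si.
exact: eW (fg i si).
Qed.

Section SignWindows.
Variable R : realDomainType.
Implicit Types a x t e : R.

Lemma ge0_add_below a x t e :
  (a + x != 0 -> e <= `|a + x|) -> x - e < t < x -> (0 <= a + t) = (0 < a + x).
Proof.
move=> margin /andP[lo hi]; move: margin.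
case: (ltrgt0P (a + x)) => ax margin.
- by apply/idP; have := margin isT; lra.
- by apply/negbTE; rewrite -ltNge; lra.
- by apply/negbTE; rewrite -ltNge; lra.
Qed.

Lemma ge0_add_above a x t e :
  (a + x != 0 -> e <= `|a + x|) -> x < t < x + e -> (0 <= a + t) = (0 <= a + x).
Proof.
move=> margin /andP[lo hi]; move: margin.
case: (ltrgt0P (a + x)) => ax margin.
- by apply/idP; lra.
- by apply/negbTE; rewrite -ltNge; have := margin isT; lra.
- by apply/idP; lra.
Qed.

End SignWindows.

Section Lattice.
Variables (R : realType) (d D : nat) (V : 'M[R]_(d, D)).
Local Notation vd := (vdot V).
Local Notation full := [set: 'I_d]%SET.

Lemma vdotD k m n : vd k (m + n) = vd k m + vd k n.
Proof. by rewrite /vdot -big_split; apply: eq_bigr => j _; rewrite mxE intrD mulrDr. Qed.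

Lemma vdotN k n : vd k (- n) = - vd k n.
Proof. by rewrite /vdot -sumrN; apply: eq_bigr => j _; rewrite mxE intrN mulrN. Qed.

Lemma vdot0 k : vd k 0 = 0.
Proof. by rewrite /vdot big1 // => j _; rewrite mxE mulr0. Qed.

Lemma LvS (I I' : {set 'I_d}) n : I \subset I' -> Lv V I' n -> Lv V I n.
Proof.
move=> /fintype.subsetP sII' /forallP Ln; apply/forallP => k; apply/implyP => kI.
by have /implyP := Ln k; apply; apply: sII'.
Qed.

Lemma LJ_set0 J x : LJ V finset.set0 J x = (fun _ => true).
Proof. by apply: funext => m; apply/forallP => k; rewrite inE. Qed.

Lemma shiftZ_Lv I n : shiftZ (Lv V I) n = LJ V I finset.set0 (fun k => vd k n).
Proof.
by apply: funext => m; apply: eq_forallb => k; rewrite inE vdotD.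
Qed.

Lemma XiE I :
  I != finset.set0 ->
  Xi V I = closure ([set shiftZ (Lv V I) n | n in [set n | Lv V I n]]
                    : set (prod_topology (@BoolT D))).
Proof. by rewrite /Xi => /negbTE ->. Qed.

Lemma Xv_ge0 I x k : Xv V I x -> k \in I -> 0 <= x k.
Proof.
move=> /closure_ptws_realP Xx kI; rewrite leNgt; apply/negP => xk_lt0.
have Nxk_gt0 : 0 < - x k by rewrite oppr_gt0.
have [_ [n Ln <-]] := Xx [:: k] (- x k) Nxk_gt0.
move=> /(_ k (mem_head _ _)); rewrite /Av kI ltr_distl.
by have /forallP /(_ k) := Ln; rewrite kI /=; lra.
Qed.

Lemma XJ_gt0 I J x k : XJ V I J x -> k \in I -> k \in J -> 0 < x k.
Proof.
move=> [Xx xJ] kI kJ; have [_ [_ xk_neq0]] := xJ k kJ.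
by rewrite lt_neqAle eq_sym xk_neq0 (Xv_ge0 Xx kI).
Qed.

Section DominatedSets.
Variable S : subZ D.
Hypothesis S0 : S 0.
Hypothesis S_dominated :
  forall m, (forall k, exists2 m', S m' & vd k m' <= vd k m) -> S m.

Let E k : set R := [set vd k m | m in [set m | S m]].
Let bounded : {set 'I_d} := [set k | `[< has_lbound (E k) >]].
Let offset k : R := if k \in bounded then - inf (E k) else 0.
Let strict : {set 'I_d} :=
  [set k in bounded | `[< ~ exists2 m, S m & vd k m = - offset k >]
                      && `[< exists n, vd k n = offset k >]].

Let offset_lb k m : k \in bounded -> S m -> 0 <= vd k m + offset k.
Proof.
move=> kb Sm; rewrite /offset kb subr_ge0; apply: ge_inf; last by exists m.
by move: kb; rewrite inE => /asboolP.
Qed.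

Let S_sub_LJ m : S m -> LJ V bounded strict offset m.
Proof.
move=> Sm; apply/forallP => k; apply/implyP => kb.
have lb := offset_lb kb Sm; case: ifP => // ks.
rewrite lt_neqAle lb andbT; apply/eqP => zero.
move: ks; rewrite inE kb /= => /andP[/asboolP not_attained _].
by apply: not_attained; exists m => //; lra.
Qed.

Let LJ_dominated m k :
  LJ V bounded strict offset m -> exists2 m', S m' & vd k m' <= vd k m.
Proof.
move=> /forallP /(_ k); have [kb|kNb] := boolP (k \in bounded); rewrite ?kb /= => hk.
  have E_inf : has_inf (E k).
    by split; [exists 0, 0; rewrite ?vdot0 | move: kb; rewrite inE => /asboolP].
  have : 0 <= vd k m + offset k by move: hk; case: ifP => // _ /ltW.
  rewrite le_eqVlt => /orP[/eqP a_eq0 | a_gt0].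
    have kNs : k \notin strict by apply: contraTN hk => ks; rewrite ks -a_eq0 ltxx.
    move: kNs; rewrite inE kb /= negb_and => /orP[/asboolPn attained | /asboolPn unrealized].
      by have [m' Sm' eq_m'] := contrapT attained; exists m' => //; lra.
    by exfalso; apply: unrealized; exists (- m); rewrite vdotN; lra.
  have [_ [m' Sm' <-] lt_m'] := inf_adherent a_gt0 E_inf.
  by exists m' => //; move: lt_m'; rewrite /offset kb; lra.
have kNlb : ~ has_lbound (E k) by move: kNb; rewrite inE => /asboolPn.
apply: contrapT => none; apply: kNlb; exists (vd k m) => _ [m' Sm' <-].
by rewrite leNgt; apply/negP => lt_m'; apply: none; exists m' => //; apply: ltW.
Qed.

Lemma dominated_eq_LJ : exists (I J : {set 'I_d}) x,
  [/\ J \subset I, orthant I x,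
      forall k, k \in J -> exists n, x k = vd k n /\ x k != 0 & S = LJ V I J x].
Proof.
exists bounded, strict, offset; split.
- by apply/fintype.subsetP => k; rewrite inE => /andP[].
- move=> k; have [kb|kNb] := boolP (k \in bounded); last by rewrite /offset (negbTE kNb).
  by have := offset_lb kb S0; rewrite vdot0 add0r.
- move=> k; rewrite inE => /andP[_ /andP[/asboolP not_attained /asboolP [n nk]]].
  exists n; split => //; apply/eqP => off0; apply: not_attained.
  by exists 0; rewrite // vdot0 off0 oppr0.
- apply: funext => m; apply/idP/idP => [/S_sub_LJ // | LJm].
  by apply: S_dominated => k; apply: LJ_dominated.
Qed.

End DominatedSets.

Section TranslateLimits.
Hypothesis full_neq0 : full != finset.set0.
Variable S : subZ D.
Hypothesis XS : Xi V full S.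

Lemma Xi_setT_approx (s : seq (ZD D)) :
  exists2 n, Lv V full n & forall m, m \in s -> Lv V full (m + n) = S m.
Proof.
move: XS; rewrite XiE // => /closure_ptws_boolP /(_ s) [_ [n Ln <-] agree].
by exists n.
Qed.

Lemma Xi_setT_0 : S 0.
Proof.
by have [n Ln /(_ 0 (mem_head _ _))] := Xi_setT_approx [:: 0]; rewrite add0r => <-.
Qed.

Lemma Xi_setT_dominated m :
  (forall k, exists2 m', S m' & vd k m' <= vd k m) -> S m.
Proof.
move=> dom.
have /choice [w Sw] : forall k, exists m', S m' /\ vd k m' <= vd k m.
  by move=> k; have [m' Sm' le_m'] := dom k; exists m'.
have [n Ln agree] := Xi_setT_approx (m :: map w (enum 'I_d)).
rewrite -agree ?mem_head //; apply/forallP => k; apply/implyP => _.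
have [Swk wk_le] := Sw k.
move: Swk; rewrite -agree ?inE ?map_f ?mem_enum ?orbT // => /forallP /(_ k).
by rewrite inE /= !vdotD; lra.
Qed.

End TranslateLimits.

Section CompletelyIrrational.
Hypothesis hCI : CI V full.

Lemma CI_approx y e : (forall k, 0 <= y k) -> 0 < e ->
  exists2 n, Lv V full n & forall k, `|vd k n - y k| < e.
Proof.
move=> y_ge0 e_gt0.
have /closure_ptws_realP Xy : Xv V full y by rewrite hCI => k; rewrite inE.
have [_ [n Ln <-] yn] := Xy (enum 'I_d) e e_gt0.
by exists n => // k; have := yn k (mem_enum _ k); rewrite /Av inE.
Qed.

Lemma orthant_Xv I x : orthant I x -> Xv V I x.
Proof.
move=> Ox; apply/closure_ptws_realP => s e e_gt0.
have x_ge0 k : 0 <= x k by have := Ox k; case: ifP => // _ /eqP ->.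
have [n Ln xn] := CI_approx x_ge0 e_gt0.
exists (Av V I n); first by exists n => //; apply: LvS Ln; exact: finset.subsetT.
move=> k _; rewrite /Av; case: ifP => kI; first exact: xn.
by have := Ox k; rewrite kI => /eqP ->; rewrite subrr normr0.
Qed.

Lemma translate_realizes_LJ (I0 I J : {set 'I_d}) x (s : seq (ZD D)) :
  I \subset I0 -> (forall k, k \in I -> 0 <= x k) ->
  (forall k, k \in I -> k \in J -> 0 < x k) ->
  exists2 n, Lv V full n & forall m, m \in s -> Lv V I0 (m + n) = LJ V I J x m.
Proof.
move=> /fintype.subsetP sII0 x_ge0 x_gt0.
pose vals := [seq vd k m + x k | m <- s, k <- enum 'I_d] ++ [seq x k | k <- enum 'I_d].
have : \forall e \near (0 : R)^'+, forall c, c \in vals -> c != 0 -> e <= `|c|.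
  apply: filter_forall_in => c _; have [->|c_neq0] := eqVneq c 0; first exact: nearW.
  have c_norm_gt0 : 0 < `|c| by rewrite normr_gt0.
  by apply: filterS (nbhs_right_lt c_norm_gt0) => e /ltW.
move=> /(filterI (nbhs_right_gt 0)) /filter_ex [e [e_gt0 margin]].
have : \forall M \near +oo, forall c, c \in [seq vd k m | m <- s, k <- enum 'I_d] ->
    `|c| <= M.
  by apply: filter_forall_in => c _; apply: nbhs_pinfty_ge; apply: num_real.
move=> /(filterI (nbhs_pinfty_ge (num_real (0 : R)))) /filter_ex [M [M_ge0 bound]].
have e_le_x k : k \in I -> k \in J -> e <= x k.
  move=> kI kJ; have xk_gt0 := x_gt0 k kI kJ; rewrite -(gtr0_norm xk_gt0).
  by apply: margin; [rewrite mem_cat map_f ?mem_enum ?orbT | rewrite gt_eqF].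
pose y k := if k \in I then (if k \in J then x k - e / 2 else x k + e / 2) else M + e.
have y_ge0 k : 0 <= y k.
  rewrite /y; case: ifP => kI; last lra.
  by have := x_ge0 k kI; case: ifP => kJ; [have := e_le_x k kI kJ|]; lra.
have e2_gt0 : 0 < e / 2 by rewrite divr_gt0.
have [n Ln yn] := CI_approx y_ge0 e2_gt0.
exists n => // m ms; apply: eq_forallb => k; rewrite vdotD.
have margin_mk : vd k m + x k != 0 -> e <= `|vd k m + x k|.
  by apply: margin; rewrite mem_cat (allpairs_f _ ms (mem_enum _ k)).
have := yn k; rewrite /y ltr_distl; case: (boolP (k \in I)) => kI.
  rewrite (sII0 k kI) /=; case: ifP => kJ yk.
    by apply: ge0_add_below margin_mk _; apply/andP; split; lra.
  by apply: ge0_add_above margin_mk _; apply/andP; split; lra.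
case: (k \in I0) => //= yk.
have := bound (vd k m) (allpairs_f _ ms (mem_enum _ k)); rewrite ler_norml; lra.
Qed.

Lemma LJ_in_Xi (I0 I J : {set 'I_d}) x :
  I \subset I0 -> (forall k, k \in I -> 0 <= x k) ->
  (forall k, k \in I -> k \in J -> 0 < x k) -> Xi V I0 (LJ V I J x).
Proof.
move=> sII0 x_ge0 x_gt0.
have [I0_0|I0_neq0] := eqVneq I0 finset.set0.
  move: sII0; rewrite I0_0 /Xi eqxx finset.subset0 => /eqP ->.
  by rewrite LJ_set0.
rewrite XiE //; apply/closure_ptws_boolP => s.
have [n Ln realizes] := translate_realizes_LJ s sII0 x_ge0 x_gt0.
exists (shiftZ (Lv V I0) n); last by move=> m /realizes.
by exists n => //; apply: LvS Ln; exact: finset.subsetT.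
Qed.

Lemma Xi_subset_Xi_setT I : Xi V I `<=` Xi V full.
Proof.
have [-> S|I_neq0] := eqVneq I finset.set0.
  rewrite {1}/Xi eqxx => ->; rewrite -(LJ_set0 finset.set0 (fun _ => 0)).
  by apply: LJ_in_Xi => [|k|k]; rewrite ?finset.sub0set ?inE.
have full_neq0 : full != finset.set0.
  by apply: contraNneq I_neq0 => full0; rewrite -finset.subset0 -full0 finset.subsetT.
have Xi_closed : closed (Xi V full : set (prod_topology (@BoolT D))).
  by rewrite XiE //; exact: closed_closure.
rewrite (XiE I_neq0) closureE; apply: smallest_sub Xi_closed _ => _ [n Ln <-].
rewrite shiftZ_Lv.
apply: LJ_in_Xi => [|k kI|k]; rewrite ?finset.subsetT ?inE //.
by have /forallP /(_ k) := Ln; rewrite kI.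
Qed.

Lemma XJ_LJ_in_Xi (I0 I J : {set 'I_d}) x :
  I \subset I0 -> XJ V I J x -> Xi V I0 (LJ V I J x).
Proof.
move=> sII0 XJx; apply: LJ_in_Xi sII0 _ _ => [k kI | k kI kJ].
  exact: Xv_ge0 XJx.1 kI.
exact: XJ_gt0 XJx kI kJ.
Qed.

Lemma Xi_setT_LJ S : full != finset.set0 -> Xi V full S ->
  exists (I J : {set 'I_d}) x, [/\ J \subset I, XJ V I J x & S = LJ V I J x].
Proof.
move=> full_neq0 XS.
have [I [J [x [sJI Ox xJ ->]]]] :=
  dominated_eq_LJ (Xi_setT_0 full_neq0 XS) (Xi_setT_dominated full_neq0 XS).
by exists I, J, x; split => //; split => //; apply: orthant_Xv.
Qed.

Lemma Xi_setT_eq_LJ_U_facets : full != finset.set0 ->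
  Xi V full =
    [set S | exists J x, XJ V full J x /\ S = LJ V full J x]
    `|` [set S | exists i : 'I_d, Xi V (full :\ i) S].
Proof.
move=> full_neq0.
apply/seteqP; split=> [S /(Xi_setT_LJ full_neq0) [I [J [x [_ XJx ->]]]] | S].
  have [fI|/fintype.subsetPn [i _ iNI]] := boolP (full \subset I).
    have eI : I = full by apply/eqP; rewrite finset.eqEsubset fI finset.subsetT.
    by left; rewrite eI in XJx *; exists J, x.
  right; exists i; apply: XJ_LJ_in_Xi XJx; apply/fintype.subsetP => k kI.
  by rewrite !inE andbT; apply: contraNneq iNI => <-.
by case=> [[J [x [XJx ->]]] | [i /Xi_subset_Xi_setT //]]; apply: XJ_LJ_in_Xi XJx.
Qed.

Lemma Xi_setT_eq_LJ_U_Z : full != finset.set0 ->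
  Xi V full =
    [set S | exists (I J : {set 'I_d}) x,
               [/\ I != finset.set0, J \subset I, XJ V I J x & S = LJ V I J x]]
    `|` [set (fun _ : ZD D => true)].
Proof.
move=> full_neq0.
apply/seteqP; split=> [S /(Xi_setT_LJ full_neq0) [I [J [x [sJI XJx ->]]]] | S].
  have [->|I_neq0] := eqVneq I finset.set0; first by right; rewrite LJ_set0.
  by left; exists I, J, x.
case=> [[I [J [x [_ _ XJx ->]]]] | ->]; first exact: XJ_LJ_in_Xi (finset.subsetT I) XJx.
by apply: (@Xi_subset_Xi_setT finset.set0); rewrite /Xi eqxx.
Qed.

End CompletelyIrrational.

End Lattice.

Theorem mainTheorem4 (R : realType) (d D : nat) (V : 'M[R]_(d, D)) :
  (0 < d)%N -> (d <= D)%N -> unit_lin_indep V ->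
  RCI V -> CI V [set: 'I_d]%SET ->
  Xi V [set: 'I_d]%SET =
    [set S | exists (J : {set 'I_d}) (x : 'I_d -> R),
               XJ V [set: 'I_d]%SET J x /\ S = LJ V [set: 'I_d]%SET J x]
    `|` [set S | exists i : 'I_d, Xi V ([set: 'I_d]%SET :\ i) S]
  /\
  Xi V [set: 'I_d]%SET =
    [set S | exists (I J : {set 'I_d}) (x : 'I_d -> R),
               [/\ I != finset.set0, J \subset I, XJ V I J x & S = LJ V I J x]]
    `|` [set (fun _ : ZD D => true)].
Proof.
(* Complete irrationality of the whole family already yields every admissible
   sign pattern. *)
move=> d_gt0 _ _ _ hCI.
have full_neq0 : [set: 'I_d]%SET != finset.set0 by apply/set0Pn; exists (Ordinal d_gt0).
by split; [exact: Xi_setT_eq_LJ_U_facets | exact: Xi_setT_eq_LJ_U_Z].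
Qed.
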